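(* Let $q$ be a prime power and let $R$ be a finite ring containing the field $\mathbb{F}_q$ as a subring. Let $d=\dim_{\mathbb{F}_q}R$ and let $r^*$ be the number of units of $R$. If $B$ is a blocking set of the chain geometry $\Sigma(\mathbb{F}_q,R)$, then \[ \#B\ \ge\ \left\lceil\frac{2q^d-r^*}{q+1}\right\rceil . \]
   Context: All rings are associative with unit element $1\neq 0$, and subrings share the unit. $R^2$ is regarded as a left $R$-module. The projective line $\mathbb{P}(R)$ is the set of all submodules of $R^2$ of the form $R(a,b)$ where $(a\ b)$ is the first row of some invertible $2\times 2$ matrix over $R$. For a field $K\subseteq R$ (as a subring), $\mathbb{P}(K)$ is embedded in $\mathbb{P}(R)$ via $K(a,b)\mapsto R(a,b)$. The chain geometry $\Sigma(K,R)$ has point set $\mathbb{P}(R)$ and its blocks, called chains, are the sets $\mathbb{P}(K)^g$ with $g\in \mathrm{GL}_2(R)$. A blocking set is a set $B$ of points such that every chain contains at least one element of $B$. *)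

From HB Require Import structures.
From mathcomp Require Import all_boot all_order all_algebra.
Set Implicit Arguments. Unset Strict Implicit. Unset Printing Implicit Defensive.
Import Order.TTheory GRing.Theory Num.Theory.
Local Open Scope ring_scope.

Definition invertible2 (R : nzRingType) (M : 'M[R]_2) : Prop :=
  exists N : 'M[R]_2, M *m N = 1%:M /\ N *m M = 1%:M.

Definition admissible (R : nzRingType) (a b : R) : Prop :=
  exists M : 'M[R]_2, invertible2 M /\ M ord0 ord0 = a /\ M ord0 ord_max = b.

Definition cyc (R : finNzRingType) (a b : R) : {set R * R} :=
  [set (x * a, x * b) | x : R].

Definition is_point (R : finNzRingType) (p : {set R * R}) : Prop :=
  exists a b : R, admissible a b /\ p = cyc a b.

Definition act_point (R : finNzRingType) (a b : R) (g : 'M[R]_2) : {set R * R} :=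
  let w := (\row_(j < 2) (if j == ord0 then a else b)) *m g in
  cyc (w ord0 ord0) (w ord0 ord_max).

(* The chain P(K)^g, K embedded in R via the unital ring morphism f:
   the points R((f a, f b) g) with K(a,b) in P(K). *)
Definition in_chain (K : fieldType) (R : finNzRingType) (f : {rmorphism K -> R})
  (g : 'M[R]_2) (p : {set R * R}) : Prop :=
  exists a b : K, admissible a b /\ p = act_point (f a) (f b) g.

Definition blocking_set (K : fieldType) (R : finNzRingType) (f : {rmorphism K -> R})
  (B : {set {set R * R}}) : Prop :=
  (forall p, p \in B -> is_point p) /\
  (forall g : 'M[R]_2, invertible2 g -> exists2 p, p \in B & in_chain f g p).

Definition left_dim (K : fieldType) (R : finNzRingType) (f : {rmorphism K -> R})
  (d : nat) : Prop :=
  exists s : d.-tuple R,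
    (forall x : R, exists c : 'I_d -> K, x = \sum_(i < d) f (c i) * tnth s i) /\
    (forall c : 'I_d -> K, \sum_(i < d) f (c i) * tnth s i = 0 -> forall i, c i = 0).

Definition nunits (R : finNzRingType) : nat :=
  #|[set x : R | [exists y : R, (x * y == 1) && (y * x == 1)]]|.

From HB Require Import structures.
From mathcomp Require Import all_boot all_order all_algebra zify.
Import Order.TTheory GRing.Theory Num.Theory.
Set Implicit Arguments. Unset Strict Implicit. Unset Printing Implicit Defensive.
Local Open Scope ring_scope.

(* Double counting of GL_2(R).  For a point p let frames p be the set of invertible
   matrices whose first row generates p; GL_2(R) acts transitively on the points, so all
   these sets have the same size N.  Every g in GL_2(R) meets the blocking set B through
   the chain P(K)^g, i.e. some of the q + 1 rows (1, s), (0, 1) of P(K) is sent by g into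
   a point of B; hence #GL_2(R) <= #B (q + 1) N.  On the other hand the points R(1, x),
   x in R, and R(x, 1), x a non-unit, are 2 q^d - r^* distinct points whose frames are
   pairwise disjoint subsets of GL_2(R). *)

Lemma card_bigcup_le (T I : finType) (P : pred I) (F : I -> {set T}) :
  (#|\bigcup_(i | P i) F i| <= \sum_(i | P i) #|F i|)%N.
Proof.
apply: (big_rec2 (fun (A : {set T}) (n : nat) => #|A| <= n)%N); first by rewrite cards0.
by move=> i A n _ IH; rewrite (leq_trans (leq_card_setU _ _)) // leq_add2l.
Qed.

Lemma sum_card_fibers (T T' : finType) (A : {set T}) (P : {set T'}) (h : T -> T') :
  (\sum_(p in P) #|[set x in A | h x == p]| = #|[set x in A | h x \in P]|)%N.
Proof.
rewrite -sum1_card (partition_big h (mem P)) /=; last by move=> x; rewrite inE => /andP[].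
apply: eq_bigr => p pP; rewrite -sum1_card; apply: eq_bigl => x.
by rewrite !inE; case: eqP => [->|]; rewrite ?pP ?andbT ?andbF.
Qed.

Lemma card_eq_cancel (T : finType) (A B : {set T}) (h h' : T -> T) :
  cancel h h' -> cancel h' h ->
  {in A, forall x, h x \in B} -> {in B, forall y, h' y \in A} -> #|A| = #|B|.
Proof.
move=> hK h'K hAB h'BA; apply/eqP; rewrite eqn_leq; apply/andP; split.
  rewrite -(card_imset A (can_inj hK)) subset_leq_card //.
  by apply/subsetP => _ /imsetP[x xA ->]; apply: hAB.
rewrite -(card_imset B (can_inj h'K)) subset_leq_card //.
by apply/subsetP => _ /imsetP[y yB ->]; apply: h'BA.
Qed.

Section RowAction.

Variable R : finNzRingType.

Implicit Types (u v : R * R) (g h M : 'M[R]_2) (p : {set R * R}).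

Definition vmul u g : R * R :=
  (u.1 * g ord0 ord0 + u.2 * g ord_max ord0, u.1 * g ord0 ord_max + u.2 * g ord_max ord_max).

Definition cycv u : {set R * R} := cyc u.1 u.2.

Definition toprow g : R * R := (g ord0 ord0, g ord0 ord_max).

Lemma ord2P (i : 'I_2) : i = ord0 \/ i = ord_max.
Proof. by case: i => [[|[|i]] Hi]; [left|right|]; try apply: val_inj. Qed.

Lemma mulmx2E m n (g : 'M[R]_(m, 2)) (h : 'M[R]_(2, n)) i j :
  (g *m h) i j = g i ord0 * h ord0 j + g i ord_max * h ord_max j.
Proof.
rewrite mxE !big_ord_recl big_ord0 addr0.
by rewrite (_ : lift ord0 ord0 = ord_max); last exact: val_inj.
Qed.

Lemma toprow_mul g h : toprow (g *m h) = vmul (toprow g) h.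
Proof. by rewrite /toprow /vmul !mulmx2E. Qed.

Lemma vmulA u g h : vmul (vmul u g) h = vmul u (g *m h).
Proof.
rewrite /vmul /= !mulmx2E; congr (_, _);
by rewrite !mulrDl !mulrDr !mulrA -!addrA; congr (_ + _); rewrite addrCA.
Qed.

Lemma vmul1 u : vmul u 1%:M = u.
Proof. by case: u => a b; rewrite /vmul !mxE /= !mulr1 !mulr0 addr0 add0r. Qed.

Lemma vmul_scale r u g : vmul (r * u.1, r * u.2) g = (r * (vmul u g).1, r * (vmul u g).2).
Proof. by rewrite /vmul /= !mulrDr !mulrA. Qed.

Lemma act_pointE a b g : act_point a b g = cycv (vmul (a, b) g).
Proof. by rewrite /act_point /cycv /vmul /= !mulmx2E !mxE. Qed.

Lemma in_cycv u w : (w \in cycv u) = [exists x, w == (x * u.1, x * u.2)].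
Proof.
by apply/imsetP/existsP => [[x _ ->]|[x /eqP ->]]; exists x.
Qed.

Lemma cycv_id u : u \in cycv u.
Proof. by rewrite in_cycv; apply/existsP; exists 1; rewrite !mul1r -surjective_pairing. Qed.

Lemma cycv_eq u v : cycv u = cycv v -> exists r, v = (r * u.1, r * u.2).
Proof. by move=> E; have := cycv_id v; rewrite -E in_cycv => /existsP[r /eqP ->]; exists r. Qed.

Lemma cycv_scale r s u : s * r = 1 -> cycv (r * u.1, r * u.2) = cycv u.
Proof.
move=> sr; apply/setP => w; rewrite !in_cycv /=.
apply/existsP/existsP => [[x /eqP ->]|[x /eqP ->]].
  by exists (x * r); rewrite !mulrA.
by exists (x * s); rewrite !mulrA -(mulrA x s r) sr mulr1.
Qed.

Lemma cycv_vmul u v M : cycv u = cycv v -> cycv (vmul u M) = cycv (vmul v M).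
Proof.
wlog suff: u v / cycv u = cycv v -> cycv (vmul u M) \subset cycv (vmul v M).
  by move=> H E; apply/eqP; rewrite eqEsubset !H.
move=> E; apply/subsetP => w; rewrite !in_cycv => /existsP[x /eqP ->].
have : (x * u.1, x * u.2) \in cycv v by rewrite -E in_cycv; apply/existsP; exists x.
rewrite in_cycv => /existsP[y /eqP Exy].
by apply/existsP; exists y; rewrite -vmul_scale Exy vmul_scale.
Qed.

Definition GL2 : {set 'M[R]_2} :=
  [set M | [exists N, (M *m N == 1%:M) && (N *m M == 1%:M)]].

Lemma GL2P M : reflect (invertible2 M) (M \in GL2).
Proof.
rewrite inE; apply: (iffP existsP) => [[N /andP[/eqP h1 /eqP h2]]|[N [h1 h2]]].
  by exists N.
by exists N; rewrite h1 h2 !eqxx.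
Qed.

Lemma GL2_inv M : M \in GL2 -> exists N, [/\ N \in GL2, M *m N = 1%:M & N *m M = 1%:M].
Proof. by move=> /GL2P[N [MN NM]]; exists N; split=> //; apply/GL2P; exists M. Qed.

Lemma GL2_mul g h : g \in GL2 -> h \in GL2 -> g *m h \in GL2.
Proof.
move=> /GL2P[G [g1 g2]] /GL2P[H [h1 h2]]; apply/GL2P; exists (H *m G); split.
  by rewrite mulmxA -(mulmxA g) h1 mulmx1 g1.
by rewrite mulmxA -(mulmxA H) g2 mulmx1 h2.
Qed.

Lemma GL2_1 : 1%:M \in GL2.
Proof. by apply/GL2P; exists 1%:M; rewrite mulmx1. Qed.

Definition frames p : {set 'M[R]_2} := [set g in GL2 | cycv (toprow g) == p].

Lemma in_frames p g : (g \in frames p) = (g \in GL2) && (cycv (toprow g) == p).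
Proof. by rewrite in_set. Qed.

Lemma card_frames_vmul u M : M \in GL2 -> #|frames (cycv (vmul u M))| = #|frames (cycv u)|.
Proof.
move=> MG; have [N [NG MN NM]] := GL2_inv MG.
apply: (card_eq_cancel (h := mulmx^~ N) (h' := mulmx^~ M)).
- by move=> g /=; rewrite -mulmxA NM mulmx1.
- by move=> g /=; rewrite -mulmxA MN mulmx1.
- move=> g; rewrite !in_frames /= => /andP[gG /eqP gE]; rewrite GL2_mul //=.
  by rewrite toprow_mul (cycv_vmul N gE) vmulA MN vmul1.
- move=> g; rewrite !in_frames /= => /andP[gG /eqP gE]; rewrite GL2_mul //=.
  by rewrite toprow_mul (cycv_vmul M gE).
Qed.

Lemma card_frames_toprow M :
  M \in GL2 -> #|frames (cycv (toprow M))| = #|frames (cycv (1, 0))|.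
Proof.
move=> MG; rewrite -(card_frames_vmul (1, 0) MG); congr (#|frames (cycv _)|).
by rewrite /vmul /toprow /= !mul1r !mul0r !addr0.
Qed.

Lemma card_frames_point p : is_point p -> #|frames p| = #|frames (cycv (1, 0))|.
Proof.
by move=> [a [b [[M [/GL2P MG [Ma Mb]]] ->]]]; rewrite -(card_frames_toprow MG) /toprow Ma Mb.
Qed.

Lemma card_frames_translate H p : H \in GL2 ->
  #|[set g in GL2 | cycv (vmul (toprow H) g) == p]| = #|frames p|.
Proof.
move=> HG; have [N [NG HN NH]] := GL2_inv HG.
apply: (card_eq_cancel (h := mulmx H) (h' := mulmx N)).
- by move=> g /=; rewrite mulmxA NH mul1mx.
- by move=> g /=; rewrite mulmxA HN mul1mx.
- by move=> g; rewrite in_set => /andP[gG gE]; rewrite in_frames GL2_mul // toprow_mul.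
- move=> g; rewrite in_frames => /andP[gG gE]; rewrite in_set GL2_mul //=.
  by rewrite -toprow_mul mulmxA HN mul1mx.
Qed.

Lemma frames10_gt0 : (0 < #|frames (cycv (1%R, 0%R))|)%N.
Proof.
apply/card_gt0P; exists 1%:M; rewrite in_frames GL2_1 /=.
by rewrite (_ : toprow 1%:M = (1, 0)) // /toprow !mxE.
Qed.

Definition mx2 (a b c d : R) : 'M[R]_2 :=
  \matrix_(i, j) if i == ord0 then (if j == ord0 then a else b)
                 else (if j == ord0 then c else d).

Lemma toprow_mx2 a b c d : toprow (mx2 a b c d) = (a, b).
Proof. by rewrite /toprow !mxE. Qed.

Lemma mx2_mul a b c d a' b' c' d' :
  mx2 a b c d *m mx2 a' b' c' d' =
  mx2 (a * a' + b * c') (a * b' + b * d') (c * a' + d * c') (c * b' + d * d').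
Proof.
by apply/matrixP => i j; rewrite mulmx2E !mxE; case: (ord2P i) => ->; case: (ord2P j) => ->.
Qed.

Lemma mx2_1 : mx2 1 0 0 1 = 1%:M.
Proof. by apply/matrixP => i j; rewrite !mxE; case: (ord2P i) => ->; case: (ord2P j) => ->. Qed.

Lemma GL2_mx2 a b c d a' b' c' d' :
  mx2 a b c d *m mx2 a' b' c' d' = mx2 1 0 0 1 ->
  mx2 a' b' c' d' *m mx2 a b c d = mx2 1 0 0 1 ->
  mx2 a b c d \in GL2.
Proof. by rewrite mx2_1 => h1 h2; apply/GL2P; exists (mx2 a' b' c' d'). Qed.

Lemma GL2_transvection x : mx2 1 x 0 1 \in GL2.
Proof.
by apply: (@GL2_mx2 _ _ _ _ 1 (- x) 0 1); rewrite mx2_mul;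
  congr mx2; rewrite ?(mul1r, mulr1, mul0r, mulr0, addr0, add0r, addNr, subrr).
Qed.

Lemma GL2_antidiag x : mx2 x 1 1 0 \in GL2.
Proof.
by apply: (@GL2_mx2 _ _ _ _ 0 1 1 (- x)); rewrite mx2_mul;
  congr mx2; rewrite ?(mul1r, mulr1, mul0r, mulr0, mulrN, addr0, add0r, addNr, subrr).
Qed.

Definition unit_set : {set R} := [set x | [exists y, (x * y == 1) && (y * x == 1)]].

Definition std_points : {set {set R * R}} :=
  [set cycv (1, x) | x : R] :|: [set cycv (x, 1) | x in ~: unit_set].

Lemma card_std_points : #|std_points| = (#|R| + (#|R| - nunits R))%N.
Proof.
have disj : [disjoint [set cycv (1, x) | x : R] & [set cycv (x, 1) | x in ~: unit_set]].
  apply/pred0P => p /=; apply/negP => /andP[/imsetP[x _ ->] /imsetP[y yN E]].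
  have [[r [r1 r2]] [s [s1 s2]]] := (cycv_eq E, cycv_eq (esym E)).
  move: r1 r2 s1 s2 => /= r1 r2 s1 s2; rewrite mulr1 in r1; rewrite mulr1 in s2.
  move: yN; rewrite !inE => /existsP[]; exists x.
  by rewrite {1}r1 -r2 s2 -s1 !eqxx.
rewrite /std_points cardsU (disjoint_setI0 disj) cards0 subn0 !card_imset.
- by rewrite -(cardsC unit_set) addKn.
- by move=> x y /cycv_eq[r [/= r1 r2]]; rewrite mulr1 in r2; rewrite r1 -r2 mul1r.
- by move=> x y /cycv_eq[r [/= r1 r2]]; rewrite mulr1 in r1; rewrite r2 -r1 mul1r.
Qed.

Lemma card_frames_std p : p \in std_points -> #|frames p| = #|frames (cycv (1, 0))|.
Proof.
rewrite inE => /orP[] /imsetP[x _ ->].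
  by rewrite -(card_frames_toprow (GL2_transvection x)) toprow_mx2.
by rewrite -(card_frames_toprow (GL2_antidiag x)) toprow_mx2.
Qed.

Lemma card_std_points_frames :
  (#|std_points| * #|frames (cycv (1%R, 0%R))| <= #|GL2|)%N.
Proof.
rewrite -sum_nat_const -(eq_bigr _ card_frames_std).
rewrite (sum_card_fibers GL2 std_points (fun g => cycv (toprow g))).
by apply: subset_leq_card; apply/subsetP => g; rewrite in_set => /andP[].
Qed.

End RowAction.

Section Chains.

Variables (K : finFieldType) (R : finNzRingType) (f : {rmorphism K -> R}).

(* [Some s] stands for K(1, s) and [None] for K(0, 1): a system of representatives of P(K). *)
Definition chain_rep (t : option K) : R * R := if t is Some s then (1, f s) else (0, 1).

Lemma chain_rep_toprow t : exists2 H, H \in GL2 R & chain_rep t = toprow H.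
Proof.
case: t => [s|] /=.
  by exists (mx2 1 (f s) 0 1); rewrite ?GL2_transvection ?toprow_mx2.
by exists (mx2 0 1 1 0); rewrite ?GL2_antidiag ?toprow_mx2.
Qed.

Lemma in_chain_rep g p : in_chain f g p -> exists t, cycv (vmul (chain_rep t) g) = p.
Proof.
move=> [a [b [[M [[N [MN _]] [Ma Mb]]] ->]]]; rewrite act_pointE.
have [a0|an0] := eqVneq a 0.
  have bn0 : b != 0.
    apply: contra_eqN (congr1 (fun X : 'M[K]_2 => X ord0 ord0) MN) => /eqP b0.
    by rewrite mulmx2E Ma Mb a0 b0 !mul0r addr0 mxE eq_sym oner_eq0.
  exists None; rewrite -(cycv_scale _ (r := f b) (s := f b^-1)); last first.
    by rewrite -rmorphM mulVf ?rmorph1.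
  by rewrite -vmul_scale /= a0 rmorph0 mulr0 mulr1.
exists (Some (b / a)); rewrite -(cycv_scale _ (r := f a) (s := f a^-1)); last first.
  by rewrite -rmorphM mulVf ?rmorph1.
by rewrite -vmul_scale /= mulr1 -rmorphM mulrCA mulfV ?mulr1.
Qed.

Lemma card_GL2_blocking B : blocking_set f B ->
  (#|GL2 R| <= #|B| * #|K|.+1 * #|frames (cycv (1%R : R, 0%R : R))|)%N.
Proof.
move=> [Bpt Bch].
have cover : GL2 R \subset \bigcup_(p in B) \bigcup_(t : option K)
    [set g in GL2 R | cycv (vmul (chain_rep t) g) == p].
  apply/subsetP => g gG; have [p pB /in_chain_rep [t tE]] := Bch g (elimT (GL2P g) gG).
  apply/bigcupP; exists p => //; apply/bigcupP; exists t => //.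
  by rewrite in_set gG tE eqxx.
apply: leq_trans (subset_leq_card cover) _; apply: leq_trans (card_bigcup_le _ _) _.
rewrite -mulnA -sum_nat_const; apply: leq_sum => p pB.
apply: leq_trans (card_bigcup_le _ _) _.
rewrite -card_option -sum_nat_const; apply: leq_sum => t _.
have [H HG ->] := chain_rep_toprow t.
by rewrite card_frames_translate // card_frames_point //; apply: Bpt.
Qed.

Lemma card_left_dim d : left_dim f d -> #|R| = (#|K| ^ d)%N.
Proof.
move=> [s [span indep]].
pose phi (c : {ffun 'I_d -> K}) : R := \sum_(i < d) f (c i) * tnth s i.
have phi_inj : injective phi.
  move=> c c' E; apply/ffunP => i; apply/eqP; rewrite -subr_eq0; apply/eqP.
  apply: (indep (fun i => c i - c' i)).
  under eq_bigr do rewrite rmorphB mulrBl.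
  by rewrite sumrB -/(phi c) -/(phi c') E subrr.
have phi_surj : [set: R] = phi @: [set: {ffun 'I_d -> K}].
  apply/esym/setP => x; rewrite inE; have [c ->] := span x.
  by apply/imsetP; exists (finfun c) => //; apply: eq_bigr => i _; rewrite ffunE.
by rewrite -cardsT phi_surj card_imset // cardsT card_ffun card_ord.
Qed.

End Chains.

Lemma card_blocking_set (K : finFieldType) (R : finNzRingType) (f : {rmorphism K -> R})
  (B : {set {set R * R}}) :
  blocking_set f B -> (#|std_points R| <= #|B| * #|K|.+1)%N.
Proof.
move=> Bblock; rewrite -(leq_pmul2r (frames10_gt0 R)).
exact: leq_trans (card_std_points_frames R) (card_GL2_blocking Bblock).
Qed.

Theorem mainTheorem2 (K : finFieldType) (R : finNzRingType)
  (f : {rmorphism K -> R}) (q d : nat) (B : {set {set R * R}}) :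
  #|K| = q -> left_dim f d -> blocking_set f B ->
  (Num.ceil (((2 * (q ^ d)%:Z - (nunits R)%:Z)%:~R : rat) / (q.+1)%:R)
     <= (#|B|)%:Z)%R.
Proof.
move=> Kq Rdim Bblock.
have bound := card_blocking_set Bblock.
have units_le : (nunits R <= #|R|)%N := max_card _.
rewrite card_std_points (card_left_dim Rdim) Kq in bound.
rewrite (card_left_dim Rdim) Kq in units_le.
rewrite ceil_le_int ler_pdivrMr ?ltr0n // -[(q.+1)%:R]/((q.+1)%:Z)%:~R -intrM ler_int.
lia.
Qed.
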